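(* Suppose $n\ge3$. For $i\ne j$ define $a_i=\frac{(n-1)(1-\omega_i)\eta}{n}$, $a_{ij}=a_i+a_j$, $$h_{ij}=\begin{cases}\frac{(n-1)\eta}{n}\big[(1-\omega_i)^2+\frac{\omega_i(\omega_j-\omega_i)}{n}\big] & \text{if } r_i<a_i,\\ (1-\omega_i)\eta\big[\frac{1-\omega_i}{n}+\frac{n-2}{n-1}\big]+\frac{\omega_i(n-1)(\omega_j-\omega_i)\eta}{n^2} & \text{if } r_i\in[a_i,a_{ij}),\\ \frac{(n-1)\eta}{n}\big[1-\omega_i+\frac{\omega_j-\omega_i}{n}\big] & \text{if } r_i\ge a_{ij},\end{cases}$$ and $c_{ij}=\min\big\{h_{ij}+h_{ji},\ 1-(a_i-h_{ij})I_{\{a_i>h_{ij}\}}-(a_j-h_{ji})I_{\{a_j>h_{ji}\}}\big\}$ ($I$ the indicator function). For any constant $\varepsilon>0$ let $c_\varepsilon=\max_{i\ne j}c_{ij}-\varepsilon$. Then the set $E_{c_\varepsilon}=\{(x_1,\dots,x_n)\in[0,1]^n:\max_{i,j}|x_i-x_j|\ge c_\varepsilon\}$ is finite-time robustly reachable from $[0,1]^n$ under control protocol (C6).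
   Context: $\mathcal V=\{1,\dots,n\}$, confidence thresholds $r_i\in(0,1]$, belief factors $\omega_i\in(0,1)$, $\eta>0$. States $x(t)\in[0,1]^n$. Neighbor set $\mathcal N_i(t)=\{j:|x_j(t)-x_i(t)|\le r_i\}$ (contains $i$), $\Pi_{[0,1]}(y)=\min\{1,\max\{0,y\}\}$, $x_{\rm ave}(t)=\frac1n\sum_ix_i(t)$. Control protocol (C6): $x_i(t+1)=\Pi_{[0,1]}\big(\omega_ix_{\rm ave}(t)+\frac{1-\omega_i}{|\mathcal N_i(t)|}[x_i(t)+\sum_{j\in\mathcal N_i(t)\setminus\{i\}}(x_j(t)+u_{ji}(t)+b_{ji}(t))]\big)$, where for $j\in\mathcal N_i(t)\setminus\{i\}$: $\delta_i(t)\in(0,\eta)$ is a chosen parameter, $u_{ji}(t)\in[-\eta+\delta_i(t),\eta-\delta_i(t)]$ a chosen control input, $b_{ji}(t)\in[-\delta_i(t),\delta_i(t)]$ an arbitrary uncertainty; the choices may depend on $x(0),\dots,x(t)$. A set $S\subseteq[0,1]^n$ is finite-time robustly reachable from $[0,1]^n$ under the protocol if there exist constants $T>0$ and $\varepsilon'\in(0,\eta)$ such that for every $x(0)\in[0,1]^n$, either $x(0)\in S$, or one can choose $\delta_i(t)\in[\varepsilon',\eta)$ and $u_{ji}(t)\in[-\eta+\delta_i(t),\eta-\delta_i(t)]$ ($0\le t<T$, $i\in\mathcal V$, $j\in\mathcal N_i(t)\setminus\{i\}$) guaranteeing that for arbitrary $b_{ji}(t)\in[-\delta_i(t),\delta_i(t)]$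 there is $t\in[1,T]$ with $x(t)\in S$. *)

From Stdlib Require Import Reals Lra List Arith.
Import ListNotations.
Open Scope R_scope.

(* A state x(t) in R^n, represented as a function on indices; only the
   indices 0..n-1 (agents 1..n of the paper) are meaningful. *)
Definition state := nat -> R.

Definition proj01 (y : R) : R := Rmin 1 (Rmax 0 y).

Definition Rsum (l : list R) : R := fold_right Rplus 0 l.

Definition in01n (n : nat) (x : state) : Prop :=
  forall i, (i < n)%nat -> 0 <= x i <= 1.

Definition xave (n : nat) (x : state) : R := Rsum (map x (seq 0 n)) / INR n.

Definition is_nbr (r : nat -> R) (x : state) (i j : nat) : bool :=
  if Rle_dec (Rabs (x j - x i)) (r i) then true else false.

Definition nbrs (n : nat) (r : nat -> R) (x : state) (i : nat) : list nat :=
  filter (is_nbr r x i) (seq 0 n).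

Definition nbrs' (n : nat) (r : nat -> R) (x : state) (i : nat) : list nat :=
  filter (fun j => negb (Nat.eqb j i)) (nbrs n r x i).

(* One step of protocol (C6); u j i = u_{ji}(t), b j i = b_{ji}(t). *)
Definition step (n : nat) (w r : nat -> R) (x : state) (u b : nat -> nat -> R)
  : state := fun i =>
  proj01 (w i * xave n x
          + (1 - w i) / INR (length (nbrs n r x i))
            * (x i + Rsum (map (fun j => x j + u j i + b j i) (nbrs' n r x i)))).

(* The control u(t) = ctrl (traj_hist t) may depend on x(0),...,x(t);
   the uncertainty sequence is b t j i = b_{ji}(t). *)
Fixpoint traj_hist (n : nat) (w r : nat -> R) (x0 : state)
  (ctrl : list state -> nat -> nat -> R) (b : nat -> nat -> nat -> R) (t : nat)
  : list state :=
  match t with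
  | O => [x0]
  | S t' => let h := traj_hist n w r x0 ctrl b t' in
            step n w r (hd x0 h) (ctrl h) (b t') :: h
  end.

Definition traj n w r x0 ctrl b t : state := hd x0 (traj_hist n w r x0 ctrl b t).

(* Finite-time robust reachability from [0,1]^n under (C6).
   delta h i = delta_i(t), ctrl h j i = u_{ji}(t) where h is the history
   x(t),...,x(0).  Validity of the controller choices is required on every
   history (equivalent to requiring it on realized histories, since values on
   other histories are irrelevant and valid values always exist). *)
Definition robustly_reachable (n : nat) (w r : nat -> R) (eta : R)
  (S : state -> Prop) : Prop :=
  exists (T : nat) (eps' : R),
    (0 < T)%nat /\ 0 < eps' < eta /\
    forall x0 : state, in01n n x0 ->
      S x0 \/
      exists (delta : list state -> nat -> R)
             (ctrl : list state -> nat -> nat -> R),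
        (forall h i, (i < n)%nat -> eps' <= delta h i < eta) /\
        (forall h i j, (i < n)%nat -> (j < n)%nat ->
            - (eta - delta h i) <= ctrl h j i <= eta - delta h i) /\
        forall b : nat -> nat -> nat -> R,
          (forall t i j, (t < T)%nat -> (i < n)%nat ->
             In j (nbrs' n r (traj n w r x0 ctrl b t) i) ->
             - delta (traj_hist n w r x0 ctrl b t) i <= b t j i
               <= delta (traj_hist n w r x0 ctrl b t) i) ->
          exists t, (1 <= t <= T)%nat /\ S (traj n w r x0 ctrl b t).

Definition a_ (n : nat) (w : nat -> R) (eta : R) (i : nat) : R :=
  (INR n - 1) * (1 - w i) * eta / INR n.

Definition aa_ n w eta i j : R := a_ n w eta i + a_ n w eta j.

Definition h_ (n : nat) (w r : nat -> R) (eta : R) (i j : nat) : R :=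
  let nn := INR n in
  if Rlt_dec (r i) (a_ n w eta i) then
    (nn - 1) * eta / nn * ((1 - w i) ^ 2 + w i * (w j - w i) / nn)
  else if Rlt_dec (r i) (aa_ n w eta i j) then
    (1 - w i) * eta * ((1 - w i) / nn + (nn - 2) / (nn - 1))
    + w i * (nn - 1) * (w j - w i) * eta / (nn ^ 2)
  else
    (nn - 1) * eta / nn * (1 - w i + (w j - w i) / nn).

Definition excess (a h : R) : R := if Rlt_dec h a then a - h else 0.

Definition c_ (n : nat) (w r : nat -> R) (eta : R) (i j : nat) : R :=
  Rmin (h_ n w r eta i j + h_ n w r eta j i)
       (1 - excess (a_ n w eta i) (h_ n w r eta i j)
          - excess (a_ n w eta j) (h_ n w r eta j i)).

(* max_{i <> j} c_ij  (indices 0..n-1; the list is nonempty for n >= 2) *)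
Definition cmax (n : nat) (w r : nat -> R) (eta : R) : R :=
  fold_right Rmax (c_ n w r eta 0 1)
    (flat_map (fun i => map (fun j => c_ n w r eta i j)
                          (filter (fun j => negb (Nat.eqb j i)) (seq 0 n)))
              (seq 0 n)).

Definition maxdiff (n : nat) (x : state) : R :=
  fold_right Rmax 0
    (flat_map (fun i => map (fun j => Rabs (x i - x j)) (seq 0 n)) (seq 0 n)).

Definition E_set (n : nat) (c : R) : state -> Prop :=
  fun x => in01n n x /\ maxdiff n x >= c.

From Stdlib Require Import Reals List Arith.
From Stdlib Require Import Lra Lia.
Open Scope R_scope.

(* The input is used in four phases. With zero input the protocol contracts the
   diameter of the configuration geometrically, since every agent keeps weight at least
   min w_i on the common average; after T1 steps every neighbourhood is the whole population.
   A common input then moves all agents by the same saturated amount towards a target point,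
   so that after T2 more steps the agents sit within the noise level of the target. One step
   with inputs on i and j places them a_i - theta above and a_j - theta below the cluster, and
   a last step with maximal opposite inputs moves them apart by at least h_ij + h_ji up to a
   few theta: the three branches of h_ij are the three possible neighbourhoods of i, namely
   {i}, everybody but j, and everybody. The target is chosen so that the projection onto
   [0,1] costs exactly the excess terms of c_ij; when a_i + a_j > 1 the spreading step alone
   already separates i and j by 1. All errors are multiples of the uncertainty bound delta,
   chosen small against theta <= eps/8. *)

Lemma Rabs_le_iff y e : Rabs y <= e <-> - e <= y <= e.
Proof. unfold Rabs; destruct (Rcase_abs y); split; intros; lra. Qed.

(** * Finite sums *)

Definition sumR (n : nat) (F : nat -> R) : R := Rsum (map F (seq 0 n)).

Definition b2R (b : bool) : R := if b then 1 else 0.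

Lemma Rsum_app l1 l2 : Rsum (l1 ++ l2) = Rsum l1 + Rsum l2.
Proof. induction l1 as [|a l1 IH]; simpl; [lra | rewrite IH; lra]. Qed.

Lemma Rsum_filter (F : nat -> R) p l :
  Rsum (map F (filter p l)) = Rsum (map (fun k => if p k then F k else 0) l).
Proof.
  induction l as [|a l IH]; simpl; [reflexivity|].
  destruct (p a); simpl; rewrite IH; lra.
Qed.

Lemma length_filter_INR (p : nat -> bool) l :
  INR (length (filter p l)) = Rsum (map (fun k => b2R (p k)) l).
Proof.
  induction l as [|a l IH]; [reflexivity|]. unfold Rsum in *. simpl.
  unfold b2R at 1. destruct (p a); simpl length; [rewrite S_INR|]; rewrite IH; lra.
Qed.

Lemma sumR_S n F : sumR (S n) F = sumR n F + F n.
Proof. unfold sumR. rewrite seq_S, map_app, Rsum_app. simpl. lra. Qed.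

Lemma sumR_ext n F G : (forall k, (k < n)%nat -> F k = G k) -> sumR n F = sumR n G.
Proof.
  induction n as [|n IH]; intros H; [reflexivity|].
  rewrite !sumR_S, IH, H; [reflexivity | lia | intros; apply H; lia].
Qed.

Lemma sumR_le n F G : (forall k, (k < n)%nat -> F k <= G k) -> sumR n F <= sumR n G.
Proof.
  induction n as [|n IH]; intros H; [unfold sumR; simpl; lra|]. rewrite !sumR_S.
  assert (sumR n F <= sumR n G) by (apply IH; intros; apply H; lia).
  assert (F n <= G n) by (apply H; lia). lra.
Qed.

Lemma sumR_plus n F G : sumR n (fun k => F k + G k) = sumR n F + sumR n G.
Proof. induction n; [unfold sumR; simpl; lra|]. rewrite !sumR_S, IHn. lra. Qed.

Lemma sumR_scal n c F : sumR n (fun k => c * F k) = c * sumR n F.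
Proof. induction n; [unfold sumR; simpl; lra|]. rewrite !sumR_S, IHn. lra. Qed.

Lemma sumR_minus n F G : sumR n F - sumR n G = sumR n (fun k => F k - G k).
Proof. induction n; [unfold sumR; simpl; lra|]. rewrite !sumR_S, <- IHn. lra. Qed.

Lemma sumR_const n c : sumR n (fun _ => c) = INR n * c.
Proof. induction n; [unfold sumR; simpl; lra|]. rewrite !sumR_S, IHn, S_INR. lra. Qed.

Lemma sumR_bounds n F lo hi : (forall k, (k < n)%nat -> lo <= F k <= hi) ->
  INR n * lo <= sumR n F <= INR n * hi.
Proof.
  intros H. rewrite <- !sumR_const.
  split; apply sumR_le; intros k Hk; specialize (H k Hk); lra.
Qed.

Lemma sumR_abs_le n F G : (forall k, (k < n)%nat -> Rabs (F k) <= G k) ->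
  Rabs (sumR n F) <= sumR n G.
Proof.
  intros H. apply Rabs_le_iff.
  replace (- sumR n G) with (sumR n (fun k => -1 * G k)) by (rewrite sumR_scal; ring).
  split; apply sumR_le; intros k Hk; specialize (H k Hk); apply Rabs_le_iff in H; lra.
Qed.

Lemma xave_sumR n x : xave n x = sumR n x / INR n.
Proof. reflexivity. Qed.

Lemma xave_bounds n (x : state) lo hi : (0 < n)%nat ->
  (forall k, (k < n)%nat -> lo <= x k <= hi) -> lo <= xave n x <= hi.
Proof.
  intros Hn H. assert (0 < INR n) by (apply lt_0_INR; lia). rewrite xave_sumR.
  pose proof (sumR_bounds n x lo hi H).
  split; apply Rmult_le_reg_r with (INR n); auto; field_simplify; lra.
Qed.

Lemma sumR_b2R_eqb n i : (i < n)%nat -> sumR n (fun k => b2R (k =? i)%nat) = 1.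
Proof.
  induction n as [|n IH]; intros Hi; [lia|]. rewrite sumR_S.
  destruct (Nat.eq_dec i n) as [->|Hin].
  - rewrite (sumR_ext n _ (fun _ => 0)), sumR_const.
    + unfold b2R. rewrite Nat.eqb_refl. lra.
    + intros k Hk. unfold b2R. destruct (Nat.eqb_spec k n); [lia | reflexivity].
  - rewrite IH by lia. unfold b2R. destruct (Nat.eqb_spec n i); [lia | lra].
Qed.

Lemma sumR_b2R_ge1 n i (p : nat -> bool) : (i < n)%nat -> p i = true ->
  1 <= sumR n (fun k => b2R (p k)).
Proof.
  intros Hi Hp. rewrite <- (sumR_b2R_eqb n i Hi). apply sumR_le. intros k Hk.
  unfold b2R. destruct (Nat.eqb_spec k i) as [->|]; [rewrite Hp; lra|].
  destruct (p k); lra.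
Qed.

Lemma sumR_affine2 n i j al be ga : (i < n)%nat -> (j < n)%nat ->
  sumR n (fun k => al + be * b2R (k =? i)%nat + ga * b2R (k =? j)%nat)
  = INR n * al + be + ga.
Proof.
  intros Hi Hj.
  rewrite !sumR_plus, sumR_const, !sumR_scal, !sumR_b2R_eqb by assumption. lra.
Qed.

(** * One step of the protocol *)

Lemma proj01_range y : 0 <= proj01 y <= 1.
Proof. unfold proj01, Rmin, Rmax. repeat destruct Rle_dec; lra. Qed.

Lemma proj01_le_compat y y' : y <= y' -> proj01 y <= proj01 y'.
Proof. unfold proj01, Rmin, Rmax. repeat destruct Rle_dec; lra. Qed.

Lemma proj01_add_le y d : 0 <= d -> proj01 (y + d) <= proj01 y + d.
Proof. unfold proj01, Rmin, Rmax. repeat destruct Rle_dec; lra. Qed.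

Lemma proj01_sub_ge y d : 0 <= d -> proj01 y - d <= proj01 (y - d).
Proof. unfold proj01, Rmin, Rmax. repeat destruct Rle_dec; lra. Qed.

Lemma proj01_near y z e : 0 <= z <= 1 -> Rabs (y - z) <= e -> Rabs (proj01 y - z) <= e.
Proof. rewrite !Rabs_le_iff. unfold proj01, Rmin, Rmax. repeat destruct Rle_dec; lra. Qed.

Lemma is_nbr_refl r x i : 0 <= r i -> is_nbr r x i i = true.
Proof.
  intros Hr. unfold is_nbr. destruct Rle_dec as [|C]; [reflexivity|].
  exfalso; apply C. rewrite Rminus_diag, Rabs_R0. exact Hr.
Qed.

Lemma is_nbr_iff r x i k : is_nbr r x i k = true <-> Rabs (x k - x i) <= r i.
Proof. unfold is_nbr. destruct Rle_dec; split; intros; auto; discriminate. Qed.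

Lemma In_nbrs' n r x i k :
  In k (nbrs' n r x i) <-> (k < n)%nat /\ is_nbr r x i k = true /\ k <> i.
Proof.
  unfold nbrs', nbrs. rewrite !filter_In, in_seq.
  destruct (Nat.eqb_spec k i); simpl; intuition (discriminate || lia).
Qed.

Definition pre_step n (w r : nat -> R) (x : state) (u b : nat -> nat -> R) i :=
  w i * xave n x + (1 - w i) / INR (length (nbrs n r x i))
     * (x i + Rsum (map (fun j => x j + u j i + b j i) (nbrs' n r x i))).

Lemma step_pre_step n w r x u b i : step n w r x u b i = proj01 (pre_step n w r x u b i).
Proof. reflexivity. Qed.

Lemma pre_step_sumR n w r x u b i : 0 <= r i -> (i < n)%nat ->
  pre_step n w r x u b i = w i * xave n x + (1 - w i) /
    sumR n (fun k => b2R (is_nbr r x i k)) *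
    sumR n (fun k => if is_nbr r x i k then
                       (if (k =? i)%nat then x i else x k + u k i + b k i) else 0).
Proof.
  intros Hr Hi. unfold pre_step, nbrs', nbrs.
  rewrite length_filter_INR, !Rsum_filter.
  fold (sumR n (fun k => b2R (is_nbr r x i k))).
  f_equal. f_equal.
  change (Rsum (map ?F (seq 0 n))) with (sumR n F).
  replace (x i) with (sumR n (fun k => x i * b2R (k =? i)%nat)) at 1
    by (rewrite sumR_scal, sumR_b2R_eqb; auto; ring).
  rewrite <- sumR_plus. apply sumR_ext. intros k Hk. unfold b2R.
  destruct (Nat.eqb_spec k i) as [->|].
  - rewrite is_nbr_refl by assumption. simpl. ring.
  - simpl. destruct (is_nbr r x i k); ring.
Qed.

Definition nominal_pre_step n (w : nat -> R) i (z : state) (p : nat -> bool) (U : R) :=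
  w i * xave n z + (1 - w i) / sumR n (fun k => b2R (p k))
    * sumR n (fun k => if p k then (if (k =? i)%nat then z i else z k + U) else 0).

Lemma pre_step_nominal_dist n w r x u b i z (p : nat -> bool) rho U e :
  0 <= r i -> (i < n)%nat -> 0 < w i < 1 ->
  (forall k, (k < n)%nat -> is_nbr r x i k = p k) ->
  (forall k, (k < n)%nat -> Rabs (x k - z k) <= rho) ->
  (forall k, (k < n)%nat -> k <> i -> p k = true -> Rabs (u k i + b k i - U) <= e) ->
  0 <= rho -> 0 <= e ->
  Rabs (pre_step n w r x u b i - nominal_pre_step n w i z p U) <= rho + e.
Proof.
  intros Hr Hi Hw Hp Hx Hu Hrho He.
  unfold nominal_pre_step. rewrite pre_step_sumR by assumption.
  rewrite (sumR_ext n (fun k => b2R (is_nbr r x i k)) (fun k => b2R (p k)))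
    by (intros; rewrite Hp; auto).
  rewrite (sumR_ext n (fun k => if is_nbr r x i k then _ else 0)
      (fun k => if p k then (if (k =? i)%nat then x i else x k + u k i + b k i) else 0))
    by (intros; rewrite Hp; auto).
  assert (Hpi : p i = true) by (rewrite <- Hp by assumption; apply is_nbr_refl; auto).
  set (N := sumR n (fun k => b2R (p k))).
  assert (HN : 1 <= N) by (apply sumR_b2R_ge1 with i; auto).
  set (Q := sumR n (fun k =>
              if p k then (if (k =? i)%nat then x i else x k + u k i + b k i) else 0)).
  set (Qz := sumR n (fun k => if p k then (if (k =? i)%nat then z i else z k + U) else 0)).
  assert (HQ : Rabs (Q - Qz) <= N * (rho + e)).
  { unfold Q, Qz, N. rewrite sumR_minus, Rmult_comm, <- sumR_scal. apply sumR_abs_le.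
    intros k Hk. unfold b2R. destruct (p k) eqn:E.
    - destruct (Nat.eqb_spec k i) as [->|Hki].
      + specialize (Hx i Hi). lra.
      + specialize (Hx k Hk). specialize (Hu k Hk Hki E).
        apply Rabs_le_iff in Hx. apply Rabs_le_iff in Hu. apply Rabs_le_iff. lra.
    - rewrite Rminus_0_r, Rabs_R0. lra. }
  rewrite !xave_sumR.
  assert (HS : Rabs (sumR n x - sumR n z) <= INR n * rho).
  { rewrite sumR_minus, <- sumR_const. apply sumR_abs_le. auto. }
  assert (Hn : 0 < INR n) by (apply lt_0_INR; lia).
  apply Rabs_le_iff in HQ. apply Rabs_le_iff in HS.
  assert (Bx : - rho <= (sumR n x - sumR n z) / INR n <= rho).
  { split; apply Rmult_le_reg_r with (INR n); auto; field_simplify; lra. }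
  assert (BQ : - (rho + e) <= (Q - Qz) / N <= rho + e).
  { split; apply Rmult_le_reg_r with N; try lra; field_simplify; lra. }
  replace (w i * (sumR n x / INR n) + (1 - w i) / N * Q
           - (w i * (sumR n z / INR n) + (1 - w i) / N * Qz))
    with (w i * ((sumR n x - sumR n z) / INR n) + (1 - w i) * ((Q - Qz) / N))
    by (field; lra).
  apply Rabs_le_iff. split; nra.
Qed.

Lemma pre_step_all_nbrs n w r x u b i U d :
  (i < n)%nat -> 0 <= r i -> 0 < w i < 1 -> 0 <= d ->
  (forall k, (k < n)%nat -> is_nbr r x i k = true) ->
  (forall k, u k i = U) ->
  (forall k, In k (nbrs' n r x i) -> - d <= b k i <= d) ->
  Rabs (pre_step n w r x u b i
        - (xave n x + (1 - w i) * (INR n - 1) / INR n * U)) <= d.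
Proof.
  intros Hi Hr Hw Hd Hnb Hu Hb.
  assert (Hn : 0 < INR n) by (apply lt_0_INR; lia).
  replace (xave n x + (1 - w i) * (INR n - 1) / INR n * U)
    with (nominal_pre_step n w i x (fun _ => true) U).
  - replace d with (0 + d) by ring. apply pre_step_nominal_dist; auto; try lra.
    + intros. rewrite Rminus_diag, Rabs_R0. lra.
    + intros k Hk Hki _. rewrite Hu. replace (U + b k i - U) with (b k i) by ring.
      apply Rabs_le_iff, Hb, In_nbrs'. auto.
  - unfold nominal_pre_step. rewrite xave_sumR, sumR_const. unfold b2R.
    rewrite (sumR_ext n (fun k => if (k =? i)%nat then x i else x k + U)
               (fun k => (x k + U) + (- U) * b2R (k =? i)%nat)).
    + rewrite !sumR_plus, sumR_const, sumR_scal, sumR_b2R_eqb by assumption.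
      field. lra.
    + intros k Hk. unfold b2R. destruct (Nat.eqb_spec k i) as [->|]; ring.
Qed.

Lemma pre_step_contract n w r x u b i m B q d :
  (i < n)%nat -> 0 <= r i -> 0 < w i < 1 -> 1 - w i <= q -> 0 <= d ->
  (forall k, (k < n)%nat -> m <= x k <= m + B) ->
  (forall k, u k i = 0) ->
  (forall k, In k (nbrs' n r x i) -> - d <= b k i <= d) ->
  let xb := xave n x in
  xb - q * (xb - m + d) <= pre_step n w r x u b i
    <= xb - q * (xb - m + d) + q * (B + 2 * d).
Proof.
  intros Hi Hr Hw Hq Hd Hx Hu Hb xb.
  assert (Hn : (0 < n)%nat) by lia.
  rewrite pre_step_sumR by assumption. fold xb.
  set (N := sumR n (fun k => b2R (is_nbr r x i k))).
  assert (HN : 1 <= N) by (apply sumR_b2R_ge1 with i; auto; apply is_nbr_refl; auto).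
  set (Q := sumR n _).
  assert (HQ : N * (m - d) <= Q <= N * (m + B + d)).
  { unfold Q, N. rewrite !(Rmult_comm (sumR _ _)), <- !sumR_scal.
    split; apply sumR_le; intros k Hk; unfold b2R;
      destruct (is_nbr r x i k) eqn:E; try lra;
      destruct (Nat.eqb_spec k i) as [->|];
      specialize (Hx _ Hk); try lra;
      assert (- d <= b k i <= d) by (apply Hb, In_nbrs'; auto); rewrite Hu; lra. }
  assert (Hxb : m <= xb <= m + B) by (apply xave_bounds; auto).
  assert (HQN : m - d <= Q / N <= m + B + d).
  { split; apply Rmult_le_reg_r with N; try lra; field_simplify; lra. }
  replace (w i * xb + (1 - w i) / N * Q) with (xb + (1 - w i) * (Q / N - xb)) by (field; lra).
  split; nra.
Qed.

Definition two_out (c0 : R) (i j : nat) (vi vj : R) : state :=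
  fun k => if (k =? i)%nat then c0 + vi else if (k =? j)%nat then c0 + vj else c0.

Section TwoOut.
Variables (n : nat) (w : nat -> R) (i j : nat) (c0 vi vj U : R).
Hypotheses (Hi : (i < n)%nat) (Hj : (j < n)%nat) (Hij : i <> j).

Let z := two_out c0 i j vi vj.

Lemma sumR_two_out : sumR n z = INR n * c0 + vi + vj.
Proof.
  rewrite <- (sumR_affine2 n i j c0 vi vj) by assumption. apply sumR_ext. intros k Hk.
  unfold z, two_out, b2R.
  destruct (Nat.eqb_spec k i), (Nat.eqb_spec k j); subst; try lia; ring.
Qed.

Lemma two_out_at_i : z i = c0 + vi.
Proof. unfold z, two_out. now rewrite Nat.eqb_refl. Qed.

Lemma INR_n_ge2 : 2 <= INR n.
Proof. replace 2 with (INR 2) by (simpl; ring). apply le_INR. lia. Qed.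

Lemma nominal_two_out_alone :
  nominal_pre_step n w i z (fun k => (k =? i)%nat) U
  = w i * (c0 + (vi + vj) / INR n) + (1 - w i) * (c0 + vi).
Proof.
  pose proof INR_n_ge2. unfold nominal_pre_step. rewrite xave_sumR.
  rewrite sumR_two_out, sumR_b2R_eqb by assumption.
  rewrite (sumR_ext n (fun k => if (k =? i)%nat then (if (k =? i)%nat then z i else z k + U) else 0)
             (fun k => 0 + (c0 + vi) * b2R (k =? i)%nat + 0 * b2R (k =? j)%nat)).
  - rewrite sumR_affine2 by assumption. field. lra.
  - intros k Hk. unfold b2R. rewrite two_out_at_i. destruct (Nat.eqb_spec k i); ring.
Qed.

Lemma nominal_two_out_without_other :
  nominal_pre_step n w i z (fun k => negb (k =? j)%nat) U
  = w i * (c0 + (vi + vj) / INR n)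
    + (1 - w i) * (c0 + (vi + (INR n - 2) * U) / (INR n - 1)).
Proof.
  pose proof INR_n_ge2. unfold nominal_pre_step. rewrite xave_sumR, sumR_two_out.
  rewrite (sumR_ext n (fun k => b2R (negb (k =? j)%nat))
             (fun k => 1 + 0 * b2R (k =? i)%nat + (-1) * b2R (k =? j)%nat)).
  2:{ intros k Hk. unfold b2R.
      destruct (Nat.eqb_spec k i), (Nat.eqb_spec k j); subst; try lia; simpl; ring. }
  rewrite (sumR_ext n (fun k => if negb (k =? j)%nat then _ else 0)
    (fun k => (c0 + U) + (vi - U) * b2R (k =? i)%nat + (- (c0 + U)) * b2R (k =? j)%nat)).
  2:{ intros k Hk. rewrite two_out_at_i. unfold z, two_out, b2R.
      destruct (Nat.eqb_spec k i), (Nat.eqb_spec k j); subst; try lia; simpl; ring. }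
  rewrite !sumR_affine2 by assumption. field. lra.
Qed.

Lemma nominal_two_out_all :
  nominal_pre_step n w i z (fun _ => true) U
  = w i * (c0 + (vi + vj) / INR n)
    + (1 - w i) * (c0 + (vi + vj + (INR n - 1) * U) / INR n).
Proof.
  pose proof INR_n_ge2. unfold nominal_pre_step.
  rewrite xave_sumR, sumR_two_out, sumR_const.
  rewrite (sumR_ext n (fun k => if true then _ else 0)
    (fun k => (c0 + U) + (vi - U) * b2R (k =? i)%nat + vj * b2R (k =? j)%nat)).
  2:{ intros k Hk. rewrite two_out_at_i. unfold z, two_out, b2R.
      destruct (Nat.eqb_spec k i), (Nat.eqb_spec k j); subst; try lia; simpl; ring. }
  rewrite !sumR_affine2 by assumption. unfold b2R. field. lra.
Qed.

End TwoOut.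

Lemma two_out_comm c0 i j vi vj k : i <> j ->
  two_out c0 i j vi vj k = two_out c0 j i vj vi k.
Proof.
  intros Hij. unfold two_out.
  destruct (Nat.eqb_spec k i), (Nat.eqb_spec k j); subst; congruence.
Qed.

Lemma Rabs_diff_near a b za zb rho :
  Rabs (a - za) <= rho -> Rabs (b - zb) <= rho ->
  Rabs (za - zb) - 2 * rho <= Rabs (a - b) <= Rabs (za - zb) + 2 * rho.
Proof.
  rewrite !Rabs_le_iff. intros Ha Hb. unfold Rabs.
  destruct (Rcase_abs (za - zb)), (Rcase_abs (a - b)); lra.
Qed.

Lemma signed_dev_lower sg A V c0 e : (sg = 1 \/ sg = -1) -> Rabs (A - V) <= e ->
  sg * (V - c0) - e <= sg * (A - c0).
Proof. rewrite Rabs_le_iff. intros [-> | ->] H; lra. Qed.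

Section Push.

Variables (n : nat) (w r : nat -> R) (x : state) (u b : nat -> nat -> R) (i j : nat).
Variables (sg c0 th rho d eta : R).
Hypotheses (Hn : (3 <= n)%nat) (Hi : (i < n)%nat) (Hj : (j < n)%nat) (Hij : i <> j).
Hypotheses (Hr : 0 < r i) (Hw : 0 < w i < 1) (Hsg : sg = 1 \/ sg = -1).
Hypotheses (Hrho : 0 <= rho) (Hd : 0 <= d) (Hth : 0 <= th) (Hrth : 2 * rho <= th).

Local Notation ai := (a_ n w eta i).
Local Notation aj := (a_ n w eta j).
Local Notation vi := (sg * (ai - th)).
Local Notation vj := (- sg * (aj - th)).

Hypotheses (Hthi : th <= ai) (Hthj : th <= aj).
Hypothesis Gi : r i < ai -> th + 2 * rho < ai - r i.
Hypothesis Gij : r i < aa_ n w eta i j -> 2 * th + 2 * rho < aa_ n w eta i j - r i.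
Hypothesis Hx : forall k, (k < n)%nat -> Rabs (x k - two_out c0 i j vi vj k) <= rho.
Hypothesis Hu : forall k, u k i = sg * (eta - d).
Hypothesis Hb : forall k, In k (nbrs' n r x i) -> - d <= b k i <= d.

Lemma INR_n_ge3 : 3 <= INR n.
Proof. replace 3 with (INR 3) by (simpl; ring). apply le_INR. exact Hn. Qed.

Lemma Rabs_signed v : 0 <= v -> Rabs (sg * v) = v.
Proof. intros. destruct Hsg as [-> | ->]; unfold Rabs; destruct Rcase_abs; lra. Qed.

Lemma push_dist_other k : (k < n)%nat -> k <> i -> k <> j ->
  ai - th - 2 * rho <= Rabs (x k - x i) <= ai - th + 2 * rho.
Proof.
  intros Hk Hki Hkj.
  replace (ai - th) with (Rabs (two_out c0 i j vi vj k - two_out c0 i j vi vj i)).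
  - apply Rabs_diff_near; auto.
  - unfold two_out. rewrite Nat.eqb_refl.
    destruct (Nat.eqb_spec k i), (Nat.eqb_spec k j); try lia.
    replace (c0 - (c0 + vi)) with (- sg * (ai - th)) by ring.
    rewrite Ropp_mult_distr_l_reverse, Rabs_Ropp, Rabs_signed; lra.
Qed.

Lemma push_dist_partner :
  ai + aj - 2 * th - 2 * rho <= Rabs (x j - x i) <= ai + aj - 2 * th + 2 * rho.
Proof.
  replace (ai + aj - 2 * th) with (Rabs (two_out c0 i j vi vj j - two_out c0 i j vi vj i)).
  - apply Rabs_diff_near; auto.
  - unfold two_out. rewrite !Nat.eqb_refl. destruct (Nat.eqb_spec j i); [lia|].
    replace (c0 + vj - (c0 + vi)) with (- (sg * (ai + aj - 2 * th))) by ring.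
    rewrite Rabs_Ropp, Rabs_signed; lra.
Qed.

Lemma push_signed_lower (p : nat -> bool) V :
  (forall k, (k < n)%nat -> is_nbr r x i k = p k) ->
  nominal_pre_step n w i (two_out c0 i j vi vj) p (sg * eta) = V ->
  sg * (V - c0) - (rho + 2 * d) <= sg * (pre_step n w r x u b i - c0).
Proof.
  intros Hp HV. apply signed_dev_lower; auto. rewrite <- HV.
  apply pre_step_nominal_dist; auto; try lra.
  intros k Hk Hki Hpk. rewrite Hu. apply Rabs_le_iff.
  assert (Hin : In k (nbrs' n r x i)) by (apply In_nbrs'; rewrite Hp; auto).
  specialize (Hb k Hin). destruct Hsg as [-> | ->]; lra.
Qed.

Lemma push_alone : r i < ai ->
  (INR n - 1) * eta / INR n * ((1 - w i) ^ 2 + w i * (w j - w i) / INR n)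
    - th - (rho + 2 * d) <= sg * (pre_step n w r x u b i - c0).
Proof.
  intros C. pose proof INR_n_ge3.
  eapply Rle_trans; [|apply push_signed_lower with (p := fun k => (k =? i)%nat)].
  3: apply nominal_two_out_alone; auto.
  - enough (sg * (w i * (c0 + (vi + vj) / INR n) + (1 - w i) * (c0 + vi) - c0)
            = (INR n - 1) * eta / INR n * ((1 - w i) ^ 2 + w i * (w j - w i) / INR n)
              - (1 - w i) * th) by nra.
    unfold a_. destruct Hsg as [-> | ->]; field; lra.
  - intros k Hk. destruct (Nat.eqb_spec k i) as [->|Hki]; [apply is_nbr_refl; lra|].
    unfold is_nbr. destruct Rle_dec; [|reflexivity].
    destruct (Nat.eq_dec k j) as [->|Hkj].
    + pose proof push_dist_partner. unfold aa_ in Gij. specialize (Gij ltac:(lra)). lra.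
    + pose proof (push_dist_other k Hk Hki Hkj). specialize (Gi C). lra.
Qed.

Lemma push_without_partner : ai <= r i < ai + aj ->
  (1 - w i) * eta * ((1 - w i) / INR n + (INR n - 2) / (INR n - 1))
    + w i * (INR n - 1) * (w j - w i) * eta / INR n ^ 2
    - th - (rho + 2 * d) <= sg * (pre_step n w r x u b i - c0).
Proof.
  intros C. pose proof INR_n_ge3.
  eapply Rle_trans; [|apply push_signed_lower with (p := fun k => negb (k =? j)%nat)].
  3: apply nominal_two_out_without_other; auto.
  - assert (Hk : (1 - w i) / (INR n - 1) * th <= th).
    { rewrite <- (Rmult_1_l th) at 2. apply Rmult_le_compat_r; [lra|].
      apply Rmult_le_reg_r with (INR n - 1); [lra|]. field_simplify; lra. }
    enough (sg * (w i * (c0 + (vi + vj) / INR n)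
                  + (1 - w i) * (c0 + (vi + (INR n - 2) * (sg * eta)) / (INR n - 1)) - c0)
            = (1 - w i) * eta * ((1 - w i) / INR n + (INR n - 2) / (INR n - 1))
              + w i * (INR n - 1) * (w j - w i) * eta / INR n ^ 2
              - (1 - w i) / (INR n - 1) * th) by lra.
    unfold a_. destruct Hsg as [-> | ->]; field; lra.
  - intros k Hk. destruct (Nat.eqb_spec k j) as [->|Hkj].
    + unfold is_nbr. destruct Rle_dec; [|reflexivity].
      pose proof push_dist_partner. unfold aa_ in Gij. specialize (Gij ltac:(lra)). lra.
    + destruct (Nat.eqb_spec k i) as [->|Hki]; [apply is_nbr_refl; lra|].
      apply is_nbr_iff. pose proof (push_dist_other k Hk Hki Hkj). lra.
Qed.

Lemma push_all : ai + aj <= r i ->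
  (INR n - 1) * eta / INR n * (1 - w i + (w j - w i) / INR n)
    - th - (rho + 2 * d) <= sg * (pre_step n w r x u b i - c0).
Proof.
  intros C. pose proof INR_n_ge3.
  eapply Rle_trans; [|apply push_signed_lower with (p := fun _ => true)].
  3: apply nominal_two_out_all; auto.
  - enough (sg * (w i * (c0 + (vi + vj) / INR n)
                  + (1 - w i) * (c0 + (vi + vj + (INR n - 1) * (sg * eta)) / INR n) - c0)
            = (INR n - 1) * eta / INR n * (1 - w i + (w j - w i) / INR n)) by lra.
    unfold a_. destruct Hsg as [-> | ->]; field; lra.
  - intros k Hk. apply is_nbr_iff. destruct (Nat.eqb_spec k j) as [->|Hkj].
    + pose proof push_dist_partner. lra.
    + destruct (Nat.eqb_spec k i) as [->|Hki]; [rewrite Rminus_diag, Rabs_R0; lra|].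
      pose proof (push_dist_other k Hk Hki Hkj). lra.
Qed.

Lemma pre_step_push :
  h_ n w r eta i j - th - (rho + 2 * d) <= sg * (pre_step n w r x u b i - c0).
Proof.
  unfold h_, aa_. cbv zeta.
  destruct (Rlt_dec (r i) ai); [|destruct (Rlt_dec (r i) (ai + aj))].
  - apply push_alone; auto.
  - apply push_without_partner; lra.
  - apply push_all; lra.
Qed.

End Push.

Lemma two_out_shift c i j vi vj k : c + two_out 0 i j vi vj k = two_out c i j vi vj k.
Proof. unfold two_out. destruct (k =? i)%nat; [ring|]. destruct (k =? j)%nat; ring. Qed.

Lemma proj01_gap_wide ai aj : 0 <= ai -> 0 <= aj -> 1 < ai + aj ->
  proj01 (Rmin aj 1 + ai) - proj01 (Rmin aj 1 - aj) = 1.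
Proof. intros. unfold proj01, Rmin, Rmax. repeat destruct Rle_dec; lra. Qed.

Lemma proj01_gap_narrow ai aj hij hji : 0 <= ai -> 0 <= aj -> ai + aj <= 1 ->
  let c0 := Rmax aj (Rmin (1 - ai) hji) in
  Rmin (hij + hji) (1 - excess ai hij - excess aj hji)
    <= proj01 (c0 + hij) - proj01 (c0 - hji).
Proof.
  intros H1 H2 H3 c0. unfold c0, proj01, excess, Rmin, Rmax.
  repeat (destruct Rle_dec || destruct Rlt_dec); lra.
Qed.

Lemma c_le_1 n w r eta i j : c_ n w r eta i j <= 1.
Proof. unfold c_, excess, Rmin. repeat (destruct Rle_dec || destruct Rlt_dec); lra. Qed.

Lemma fold_right_Rmax_In d l : In (fold_right Rmax d l) (d :: l).
Proof.
  induction l as [|a l IH]; simpl; [auto|].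
  destruct (Rle_dec a (fold_right Rmax d l)).
  - rewrite Rmax_right by assumption. destruct IH; auto.
  - rewrite Rmax_left by lra. auto.
Qed.

Lemma fold_right_Rmax_ge d l v : In v l -> v <= fold_right Rmax d l.
Proof.
  induction l as [|a l IH]; simpl; [tauto|]. intros [->|H].
  - apply Rmax_l.
  - eapply Rle_trans; [apply IH; auto | apply Rmax_r].
Qed.

Lemma cmax_attained n w r eta : (2 <= n)%nat ->
  exists i j, (i < n)%nat /\ (j < n)%nat /\ i <> j /\ cmax n w r eta = c_ n w r eta i j.
Proof.
  intros Hn. unfold cmax. set (l := flat_map _ (seq 0 n)).
  destruct (fold_right_Rmax_In (c_ n w r eta 0 1) l) as [H|H].
  - exists 0%nat, 1%nat. repeat split; try lia. auto.
  - unfold l in H. apply in_flat_map in H as [i [Hi H]]. apply in_map_iff in H as [j [Hc Hj]].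
    apply filter_In in Hj as [Hj Hji]. apply in_seq in Hi. apply in_seq in Hj.
    exists i, j. repeat split; try lia; auto.
    intros ->. rewrite Nat.eqb_refl in Hji. discriminate.
Qed.

Lemma maxdiff_ge n x i j : (i < n)%nat -> (j < n)%nat -> Rabs (x i - x j) <= maxdiff n x.
Proof.
  intros Hi Hj. unfold maxdiff. apply fold_right_Rmax_ge, in_flat_map. exists i.
  split; [apply in_seq; lia|]. apply in_map_iff. exists j. split; auto. apply in_seq; lia.
Qed.

Lemma pos_lower_bound (f : nat -> R) n : (forall k, (k < n)%nat -> 0 < f k) ->
  exists m, 0 < m /\ forall k, (k < n)%nat -> m <= f k.
Proof.
  induction n as [|n IH]; intros H.
  - exists 1. split; [lra | intros; lia].
  - destruct IH as [m [Hm Hk]]; [intros; apply H; lia|].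
    exists (Rmin m (f n)). split; [apply Rmin_glb_lt; auto; apply H; lia|].
    intros k Hk'. destruct (Nat.eq_dec k n) as [->|]; [apply Rmin_r|].
    eapply Rle_trans; [apply Rmin_l | apply Hk; lia].
Qed.

Lemma a_bounds n w eta i : (2 <= n)%nat -> 0 < w i < 1 -> 0 < eta ->
  0 < a_ n w eta i <= eta.
Proof.
  intros Hn Hw He.
  assert (2 <= INR n) by (replace 2 with (INR 2) by (simpl; ring); apply le_INR; auto).
  unfold a_. split.
  - apply Rdiv_lt_0_compat; [|lra]. apply Rmult_lt_0_compat; [apply Rmult_lt_0_compat|]; lra.
  - apply Rmult_le_reg_r with (INR n); [lra|].
    replace ((INR n - 1) * (1 - w i) * eta / INR n * INR n)
      with ((INR n - 1) * ((1 - w i) * eta)) by (field; lra).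
    assert ((1 - w i) * eta <= eta) by nra. nra.
Qed.

Lemma traj_S n w r x0 ctrl b t :
  traj n w r x0 ctrl b (S t)
  = step n w r (traj n w r x0 ctrl b t) (ctrl (traj_hist n w r x0 ctrl b t)) (b t).
Proof. reflexivity. Qed.

Lemma length_traj_hist n w r x0 ctrl b t : length (traj_hist n w r x0 ctrl b t) = S t.
Proof. induction t; simpl; auto. Qed.

Lemma hd_traj_hist n w r x0 ctrl b t d :
  hd d (traj_hist n w r x0 ctrl b t) = traj n w r x0 ctrl b t.
Proof. unfold traj. destruct t; reflexivity. Qed.

Lemma E_set_of_pair n c x i j : in01n n x -> (i < n)%nat -> (j < n)%nat ->
  c <= x i - x j -> E_set n c x.
Proof.
  intros Hx Hi Hj Hc. split; [assumption|]. apply Rle_ge.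
  eapply Rle_trans; [exact Hc|]. eapply Rle_trans; [apply Rle_abs | apply maxdiff_ge; auto].
Qed.

Definition gap (x y : R) : R := if Rlt_dec x y then y - x else 1.

Lemma gap_spec x y : 0 < gap x y /\ (x < y -> gap x y <= y - x).
Proof. unfold gap. destruct Rlt_dec; split; intros; lra. Qed.

Definition saturate (s v : R) : R := Rmax (- s) (Rmin s v).

Lemma Rabs_saturate_le s v : 0 <= s -> Rabs (saturate s v) <= s.
Proof.
  intros. unfold saturate, Rmax, Rmin, Rabs.
  repeat (destruct Rle_dec || destruct Rcase_abs); lra.
Qed.

Lemma saturate_step_dist s x c : 0 <= s ->
  Rabs (x + saturate s (c - x) - c) <= Rmax 0 (Rabs (c - x) - s).
Proof.
  intros. unfold saturate, Rmax, Rmin, Rabs.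
  repeat (destruct Rle_dec || destruct Rcase_abs); lra.
Qed.

Lemma saturate_step_range s x c : 0 <= s -> 0 <= x <= 1 -> 0 <= c <= 1 ->
  0 <= x + saturate s (c - x) <= 1.
Proof. intros. unfold saturate, Rmax, Rmin. repeat destruct Rle_dec; lra. Qed.

Lemma saturate_step_exact s x c : Rabs (c - x) <= s -> x + saturate s (c - x) = c.
Proof.
  rewrite Rabs_le_iff. intros. unfold saturate, Rmax, Rmin. repeat destruct Rle_dec; lra.
Qed.

Definition diam_le (n : nat) (x : state) (s : R) : Prop :=
  forall k m, (k < n)%nat -> (m < n)%nat -> Rabs (x k - x m) <= s.

Lemma diam_le_of_near n x y d : (forall l, (l < n)%nat -> Rabs (x l - y) <= d) ->
  diam_le n x (2 * d).
Proof.
  intros H k m Hk Hm. specialize (H k Hk) as Hk'. specialize (H m Hm).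
  apply Rabs_le_iff in Hk'. apply Rabs_le_iff in H. apply Rabs_le_iff. lra.
Qed.

Lemma xave_near n x y d : (0 < n)%nat -> (forall l, (l < n)%nat -> Rabs (x l - y) <= d) ->
  Rabs (xave n x - y) <= d.
Proof.
  intros Hn H. apply Rabs_le_iff.
  enough (y - d <= xave n x <= y + d) by lra.
  apply xave_bounds; auto. intros l Hl. specialize (H l Hl). apply Rabs_le_iff in H. lra.
Qed.

Lemma diam_le_mono n x s s' : s <= s' -> diam_le n x s -> diam_le n x s'.
Proof. intros Hs H k m Hk Hm. eapply Rle_trans; [apply H; auto | exact Hs]. Qed.

(** * The steering strategy *)

Section Reachability.

Variables (n : nat) (r w : nat -> R) (eta eps : R).
Hypothesis Hn : (3 <= n)%nat.
Hypothesis Hr : forall i, (i < n)%nat -> 0 < r i <= 1.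
Hypothesis Hw : forall i, (i < n)%nat -> 0 < w i < 1.
Hypothesis Heta : 0 < eta.
Hypothesis Heps : 0 < eps.

Variables (i0 j0 : nat).
Hypotheses (Hi0 : (i0 < n)%nat) (Hj0 : (j0 < n)%nat) (Hij : i0 <> j0).
Hypothesis Hc : cmax n w r eta = c_ n w r eta i0 j0.

Variables (wmin amin rmin : R).
Hypotheses (Hwmin : 0 < wmin) (Hwmin_le : forall k, (k < n)%nat -> wmin <= w k).
Hypotheses (Hamin : 0 < amin) (Hamin_le : forall k, (k < n)%nat -> amin <= a_ n w eta k).
Hypotheses (Hrmin : 0 < rmin) (Hrmin_le : forall k, (k < n)%nat -> rmin <= r k).

Local Notation ai := (a_ n w eta i0).
Local Notation aj := (a_ n w eta j0).

(* The strict inequalities deciding the branches of h_ij and h_ji hold with this margin. *)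
Definition margin : R :=
  Rmin (Rmin (gap (r i0) ai) (gap (r i0) (ai + aj)))
       (Rmin (gap (r j0) aj) (gap (r j0) (aj + ai))).

Definition theta : R := Rmin (Rmin margin amin) eps / 8.

Definition delta : R := Rmin (Rmin (theta / 8) (eta / 2)) (Rmin (rmin * wmin / 4) (amin / 4)).

Lemma margin_spec : 0 < margin /\
  (r i0 < ai -> margin <= ai - r i0) /\ (r i0 < ai + aj -> margin <= ai + aj - r i0) /\
  (r j0 < aj -> margin <= aj - r j0) /\ (r j0 < aj + ai -> margin <= aj + ai - r j0).
Proof.
  destruct (gap_spec (r i0) ai), (gap_spec (r i0) (ai + aj)),
           (gap_spec (r j0) aj), (gap_spec (r j0) (aj + ai)).
  unfold margin, Rmin. repeat destruct Rle_dec; repeat split; intros; try lra; auto.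
Qed.

Lemma theta_spec : 0 < theta /\ theta <= margin / 8 /\ theta <= amin / 8 /\ theta <= eps / 8.
Proof.
  destruct margin_spec as [Hm _]. unfold theta, Rmin. repeat destruct Rle_dec; lra.
Qed.

Lemma delta_spec : 0 < delta /\ delta <= theta / 8 /\ delta <= eta / 2 /\
  delta <= rmin * wmin / 4 /\ delta <= amin / 4.
Proof.
  destruct theta_spec as [Hth _]. assert (0 < rmin * wmin) by nra.
  unfold delta, Rmin. repeat destruct Rle_dec; lra.
Qed.

Lemma a_spec k : (k < n)%nat -> amin <= a_ n w eta k <= eta.
Proof.
  intros Hk. split; [auto|]. apply a_bounds; auto; lia.
Qed.

Definition shift_control (s : R) (l : nat) : R := s * eta / a_ n w eta l.

Lemma shift_control_gain s l : (l < n)%nat ->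
  (1 - w l) * (INR n - 1) / INR n * shift_control s l = s.
Proof.
  intros Hl. pose proof (Hw l Hl). pose proof (a_spec l Hl).
  assert (2 <= INR n) by (replace 2 with (INR 2) by (simpl; ring); apply le_INR; lia).
  unfold shift_control, a_. field. repeat split; lra.
Qed.

Lemma Rabs_shift_control_le s l : (l < n)%nat -> Rabs s <= a_ n w eta l - theta ->
  Rabs (shift_control s l) <= eta - delta.
Proof.
  intros Hl Hs. pose proof (a_spec l Hl). pose proof theta_spec. pose proof delta_spec.
  set (a := a_ n w eta l) in *.
  apply Rabs_le_iff in Hs. apply Rabs_le_iff. unfold shift_control. fold a.
  assert (Hp : a * delta <= eta * theta) by (apply Rmult_le_compat; lra).
  assert (s * eta <= (a - theta) * eta) by (apply Rmult_le_compat_r; lra).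
  assert (- (a - theta) * eta <= s * eta) by (apply Rmult_le_compat_r; lra).
  split; apply Rmult_le_reg_r with a; try lra;
    replace (s * eta / a * a) with (s * eta) by (field; lra); lra.
Qed.

Lemma wmin_lt_1 : wmin < 1.
Proof. pose proof (Hwmin_le 0 ltac:(lia)). pose proof (Hw 0%nat ltac:(lia)). lra. Qed.

Variables (T1 T2 : nat).
Hypothesis HT1 : (1 - wmin) ^ T1 < rmin / 2.
Hypotheses (HT2pos : (0 < T2)%nat) (HT2 : / INR T2 < amin / 4).

Lemma T2_large : 1 < INR T2 * (amin / 4).
Proof.
  assert (0 < INR T2) by (apply lt_0_INR; auto).
  apply Rmult_lt_reg_l with (/ INR T2); [apply Rinv_0_lt_compat; auto|].
  rewrite <- Rmult_assoc, Rinv_l, Rmult_1_l, Rmult_1_r by lra. exact HT2.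
Qed.

Local Notation hji := (h_ n w r eta j0 i0).

Definition target : R :=
  if Rlt_dec 1 (ai + aj) then Rmin aj 1 else Rmax aj (Rmin (1 - ai) hji).

Definition spread_offset : nat -> R := two_out 0 i0 j0 (ai - theta) (- (aj - theta)).

(* [control L] is the input used to compute x(L) from x(L-1). *)
Definition control (L : nat) (x : state) (i : nat) : R :=
  if (L <=? T1)%nat then 0
  else if (L <=? T1 + T2)%nat then shift_control (saturate (amin / 2) (target - xave n x)) i
  else if (L =? S (T1 + T2))%nat then shift_control (spread_offset i) i
  else two_out 0 i0 j0 (eta - delta) (- (eta - delta)) i.

Lemma control_consensus L x i : (L <= T1)%nat -> control L x i = 0.
Proof. intros HL. unfold control. now rewrite (proj2 (Nat.leb_le _ _) HL). Qed.

Lemma control_travel L x i : (T1 < L <= T1 + T2)%nat ->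
  control L x i = shift_control (saturate (amin / 2) (target - xave n x)) i.
Proof.
  intros HL. unfold control.
  rewrite (proj2 (Nat.leb_gt L T1)), (proj2 (Nat.leb_le L (T1 + T2))) by lia.
  reflexivity.
Qed.

Lemma control_spread x i : control (S (T1 + T2)) x i = shift_control (spread_offset i) i.
Proof.
  unfold control.
  rewrite (proj2 (Nat.leb_gt _ T1)), (proj2 (Nat.leb_gt _ (T1 + T2))), Nat.eqb_refl by lia.
  reflexivity.
Qed.

Lemma control_push x i :
  control (S (S (T1 + T2))) x i = two_out 0 i0 j0 (eta - delta) (- (eta - delta)) i.
Proof.
  unfold control.
  rewrite (proj2 (Nat.leb_gt _ T1)), (proj2 (Nat.leb_gt _ (T1 + T2))),
    (proj2 (Nat.eqb_neq _ (S (T1 + T2)))) by lia.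
  reflexivity.
Qed.

Lemma control_admissible L x i : (i < n)%nat ->
  - (eta - delta) <= control L x i <= eta - delta.
Proof.
  intros Hi.
  destruct theta_spec as (Hth & _ & Htha & _). destruct delta_spec as (Hdl & Hdlt & Hdle & _).
  destruct (a_spec i Hi), (a_spec i0 Hi0), (a_spec j0 Hj0).
  apply Rabs_le_iff. unfold control.
  destruct (L <=? T1)%nat; [rewrite Rabs_R0; lra|].
  destruct (L <=? T1 + T2)%nat; [|destruct (L =? S (T1 + T2))%nat].
  - apply Rabs_shift_control_le; auto.
    eapply Rle_trans; [apply Rabs_saturate_le; lra | lra].
  - apply Rabs_shift_control_le; auto. apply Rabs_le_iff.
    unfold spread_offset, two_out.
    destruct (Nat.eqb_spec i i0) as [->|]; [lra|].
    destruct (Nat.eqb_spec i j0) as [->|]; lra.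
  - apply Rabs_le_iff. unfold two_out.
    destruct (i =? i0)%nat; [lra|]. destruct (i =? j0)%nat; lra.
Qed.

Definition history_control (h : list state) (k i : nat) : R :=
  control (length h) (hd (fun _ => 0) h) i.

Lemma target_range : 0 <= target <= 1.
Proof.
  destruct (a_spec i0 Hi0), (a_spec j0 Hj0).
  unfold target. destruct Rlt_dec; unfold Rmin, Rmax; repeat destruct Rle_dec; lra.
Qed.

Section Run.

Variables (x0 : state) (b : nat -> nat -> nat -> R).
Hypothesis Hx0 : in01n n x0.

Let X := traj n w r x0 history_control b.

Hypothesis Hb : forall t i k, (t < T1 + T2 + 2)%nat -> (i < n)%nat ->
  In k (nbrs' n r (X t) i) -> - delta <= b t k i <= delta.

Lemma X_S t : X (S t) = step n w r (X t) (fun _ i => control (S t) (X t) i) (b t).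
Proof.
  unfold X. rewrite traj_S. unfold history_control. rewrite length_traj_hist, hd_traj_hist.
  reflexivity.
Qed.

Lemma X_range t k : (k < n)%nat -> 0 <= X t k <= 1.
Proof.
  intros Hk. destruct t as [|t]; [apply Hx0; auto|].
  rewrite X_S, step_pre_step. apply proj01_range.
Qed.

Lemma xave_X_range t : 0 <= xave n (X t) <= 1.
Proof. apply xave_bounds; [lia|]. intros; apply X_range; auto. Qed.

Lemma consensus_phase t : (t <= T1)%nat -> exists m, forall k, (k < n)%nat ->
  m <= X t k <= m + ((1 - wmin) ^ t + 2 * delta / wmin).
Proof.
  pose proof wmin_lt_1. destruct delta_spec as (Hdl & _).
  assert (Hd : 0 <= 2 * delta / wmin) by (apply Rle_mult_inv_pos; lra).
  induction t as [|t IH]; intros Ht.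
  - exists 0. intros k Hk. pose proof (Hx0 k Hk). simpl. unfold X, traj. simpl. lra.
  - destruct IH as [m Hm]; [lia|].
    set (q := 1 - wmin). set (B := q ^ t + 2 * delta / wmin). set (xb := xave n (X t)).
    exists (proj01 (xb - q * (xb - m + delta))). intros k Hk. rewrite X_S, step_pre_step.
    destruct (pre_step_contract n w r (X t) (fun _ i => control (S t) (X t) i) (b t) k m
                B q delta Hk) as [I1 I2]; auto.
    + pose proof (Hr k Hk); lra.
    + pose proof (Hwmin_le k Hk); unfold q; lra.
    + lra.
    + intros; apply control_consensus; lia.
    + intros; apply Hb; auto; lia.
    + assert (Hqt : 0 <= q ^ t) by (apply pow_le; unfold q; lra).
      assert (HB : 0 <= B) by (unfold B; lra).
      assert (Hbudget : q * (B + 2 * delta) = q ^ S t + 2 * delta / wmin - 2 * delta * wmin)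
        by (unfold B, q; simpl; field; lra).
      assert (0 <= 2 * delta * wmin) by nra.
      split; [apply proj01_le_compat; auto|].
      eapply Rle_trans; [apply proj01_le_compat, I2|].
      eapply Rle_trans; [apply proj01_add_le, Rmult_le_pos; unfold q; lra | unfold xb; lra].
Qed.

Lemma consensus_reached : diam_le n (X T1) rmin.
Proof.
  pose proof wmin_lt_1. destruct delta_spec as (Hdl & _ & _ & Hdlr & _).
  destruct (consensus_phase T1 (le_n _)) as [m Hm].
  assert (Hspread : (1 - wmin) ^ T1 + 2 * delta / wmin <= rmin).
  { enough (2 * delta / wmin <= rmin / 2) by lra.
    apply Rmult_le_reg_r with wmin; [lra|].
    replace (2 * delta / wmin * wmin) with (2 * delta) by (field; lra). nra. }
  intros k l Hk Hl. specialize (Hm k Hk) as Hk'. specialize (Hm l Hl).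
  apply Rabs_le_iff. lra.
Qed.

Lemma pre_step_shift t s : (t < T1 + T2 + 2)%nat -> diam_le n (X t) rmin ->
  (forall l, control (S t) (X t) l = shift_control (s l) l) ->
  forall l, (l < n)%nat ->
  Rabs (pre_step n w r (X t) (fun _ i => control (S t) (X t) i) (b t) l
        - (xave n (X t) + s l)) <= delta.
Proof.
  intros Ht Hdiam Hs l Hl. destruct delta_spec as (Hdl & _).
  rewrite <- (shift_control_gain (s l) l Hl), <- Hs.
  apply pre_step_all_nbrs; auto.
  - pose proof (Hr l Hl). lra.
  - lra.
  - intros k Hk. apply is_nbr_iff. eapply Rle_trans; [apply Hdiam; auto | auto].
Qed.

Lemma travel_step t : (T1 <= t < T1 + T2)%nat -> diam_le n (X t) rmin ->
  forall l, (l < n)%nat ->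
  Rabs (X (S t) l - (xave n (X t) + saturate (amin / 2) (target - xave n (X t)))) <= delta.
Proof.
  intros Ht Hdiam l Hl. rewrite X_S, step_pre_step.
  apply proj01_near.
  - apply saturate_step_range; [lra | apply xave_X_range | apply target_range].
  - apply (pre_step_shift t (fun _ => saturate (amin / 2) (target - xave n (X t)))); auto.
    + lia.
    + intros; apply control_travel; lia.
Qed.

Lemma travel_phase k : (k <= T2)%nat ->
  diam_le n (X (T1 + k)) rmin /\
  Rabs (xave n (X (T1 + k)) - target) <= Rmax 0 (1 - INR k * (amin / 4)) + delta.
Proof.
  pose proof wmin_lt_1. destruct delta_spec as (Hdl & _ & _ & Hdlr & Hdla).
  induction k as [|k IH]; intros Hk.
  - rewrite Nat.add_0_r. split; [apply consensus_reached|].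
    pose proof (xave_X_range T1). pose proof target_range.
    apply Rabs_le_iff. simpl INR. unfold Rmax. destruct Rle_dec; lra.
  - destruct IH as [Hdiam Hdist]; [lia|].
    set (xb := xave n (X (T1 + k))). fold xb in Hdist.
    set (y := xb + saturate (amin / 2) (target - xb)).
    assert (Hnear : forall l, (l < n)%nat -> Rabs (X (T1 + S k) l - y) <= delta).
    { intros l Hl. rewrite Nat.add_succ_r. apply travel_step; auto. lia. }
    split.
    + apply (diam_le_mono _ _ (2 * delta)); [nra | apply (diam_le_of_near _ _ y); auto].
    + pose proof (xave_near n _ _ _ ltac:(lia) Hnear) as Hxy.
      pose proof (saturate_step_dist (amin / 2) xb target ltac:(lra)) as Hyt. fold y in Hyt.
      rewrite Rabs_minus_sym in Hdist.
      assert (HM : Rmax 0 (Rabs (target - xb) - amin / 2)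
                   <= Rmax 0 (1 - INR (S k) * (amin / 4))).
      { rewrite S_INR. revert Hdist. unfold Rmax. repeat destruct Rle_dec; intros; lra. }
      replace (xave n (X (T1 + S k)) - target)
        with ((xave n (X (T1 + S k)) - y) + (y - target)) by ring.
      eapply Rle_trans; [apply Rabs_triang | lra].
Qed.

Lemma cluster_at_target l : (l < n)%nat -> Rabs (X (T1 + T2) l - target) <= delta.
Proof.
  intros Hl. destruct delta_spec as (Hdl & _ & _ & _ & Hdla).
  pose proof T2_large as Hlarge.
  set (k := pred T2). assert (Hk : T2 = S k) by (unfold k; lia).
  rewrite Hk in Hlarge |- *. rewrite S_INR in Hlarge.
  destruct (travel_phase k ltac:(lia)) as [Hdiam Hdist].
  rewrite <- (saturate_step_exact (amin / 2) (xave n (X (T1 + k))) target).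
  - rewrite Nat.add_succ_r. apply travel_step; auto. lia.
  - rewrite Rabs_minus_sym. eapply Rle_trans; [exact Hdist|].
    unfold Rmax. destruct Rle_dec; lra.
Qed.

Local Notation spread_pre l :=
  (pre_step n w r (X (T1 + T2)) (fun _ i => control (S (T1 + T2)) (X (T1 + T2)) i)
     (b (T1 + T2)) l).

Lemma spread_step_pre l : (l < n)%nat ->
  Rabs (spread_pre l - (target + spread_offset l)) <= 2 * delta.
Proof.
  intros Hl. pose proof wmin_lt_1. destruct delta_spec as (Hdl & _ & _ & Hdlr & _).
  assert (Hdiam : diam_le n (X (T1 + T2)) rmin).
  { apply (diam_le_mono _ _ (2 * delta)); [nra|].
    apply (diam_le_of_near _ _ target), cluster_at_target. }
  pose proof (pre_step_shift (T1 + T2) spread_offset ltac:(lia) Hdiam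
                (control_spread _) l Hl) as A.
  pose proof (xave_near n _ _ _ ltac:(lia) cluster_at_target) as Hx.
  replace (spread_pre l - (target + spread_offset l))
    with ((spread_pre l - (xave n (X (T1 + T2)) + spread_offset l))
          + (xave n (X (T1 + T2)) - target)) by ring.
  eapply Rle_trans; [apply Rabs_triang | lra].
Qed.

Lemma spread_offset_i0 : spread_offset i0 = ai - theta.
Proof. unfold spread_offset, two_out. rewrite Nat.eqb_refl. ring. Qed.

Lemma spread_offset_j0 : spread_offset j0 = - (aj - theta).
Proof.
  unfold spread_offset, two_out. rewrite (proj2 (Nat.eqb_neq j0 i0)), Nat.eqb_refl by auto.
  ring.
Qed.

Lemma reach_wide : 1 < ai + aj ->
  cmax n w r eta - eps <= X (S (T1 + T2)) i0 - X (S (T1 + T2)) j0.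
Proof.
  intros Hwide.
  destruct theta_spec as (Hth & _ & _ & Hthe). destruct delta_spec as (Hdl & Hdlt & _).
  destruct (a_spec i0 Hi0) as [Hai _], (a_spec j0 Hj0) as [Haj _].
  assert (Et : target = Rmin aj 1) by (unfold target; destruct Rlt_dec; [reflexivity | lra]).
  pose proof (spread_step_pre i0 Hi0) as A1. pose proof (spread_step_pre j0 Hj0) as A2.
  rewrite spread_offset_i0 in A1. rewrite spread_offset_j0 in A2.
  apply Rabs_le_iff in A1 as [A1 _]. apply Rabs_le_iff in A2 as [_ A2].
  rewrite !X_S, !step_pre_step.
  assert (B1 : proj01 (target + ai) - (theta + 2 * delta) <= proj01 (spread_pre i0)).
  { eapply Rle_trans; [apply proj01_sub_ge; lra | apply proj01_le_compat; lra]. }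
  assert (B2 : proj01 (spread_pre j0) <= proj01 (target - aj) + (theta + 2 * delta)).
  { eapply Rle_trans; [apply proj01_le_compat | apply proj01_add_le]; lra. }
  pose proof (proj01_gap_wide ai aj ltac:(lra) ltac:(lra) Hwide) as Hgap.
  rewrite <- Et in Hgap.
  pose proof (c_le_1 n w r eta i0 j0). lra.
Qed.

Lemma target_narrow : ai + aj <= 1 ->
  target = Rmax aj (Rmin (1 - ai) hji) /\ aj <= target <= 1 - ai.
Proof.
  intros Hnarrow. destruct (a_spec i0 Hi0) as [Hai _].
  unfold target. destruct Rlt_dec; [lra|].
  split; [reflexivity|]. unfold Rmax, Rmin. repeat destruct Rle_dec; lra.
Qed.

Lemma spread_reached : ai + aj <= 1 -> forall l, (l < n)%nat ->
  Rabs (X (S (T1 + T2)) l - two_out target i0 j0 (ai - theta) (- (aj - theta)) l) <= 2 * delta.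
Proof.
  intros Hnarrow l Hl. destruct theta_spec as (Hth & _ & Htha & _).
  destruct (a_spec i0 Hi0) as [Hai _], (a_spec j0 Hj0) as [Haj _].
  destruct (target_narrow Hnarrow) as [_ Ht].
  rewrite X_S, step_pre_step. apply proj01_near.
  - unfold two_out. destruct (l =? i0)%nat; [lra|]. destruct (l =? j0)%nat; lra.
  - rewrite <- two_out_shift. apply spread_step_pre; auto.
Qed.

Local Notation Y := (X (S (T1 + T2))).
Local Notation final_pre l :=
  (pre_step n w r Y (fun _ i => control (S (S (T1 + T2))) Y i) (b (S (T1 + T2))) l).

Lemma two_out_spread vi vj k : vi = ai - theta -> vj = - (aj - theta) ->
  two_out target i0 j0 vi vj k = two_out target i0 j0 (ai - theta) (- (aj - theta)) k.
Proof. intros -> ->. reflexivity. Qed.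

Lemma final_push_i0 : ai + aj <= 1 ->
  h_ n w r eta i0 j0 - theta - 4 * delta <= final_pre i0 - target.
Proof.
  intros Hnarrow.
  destruct theta_spec as (Hth & Hthm & Htha & _). destruct delta_spec as (Hdl & Hdlt & _).
  destruct margin_spec as (_ & Gi & Gij & _).
  destruct (a_spec i0 Hi0) as [Hai _], (a_spec j0 Hj0) as [Haj _].
  replace (final_pre i0 - target) with (1 * (final_pre i0 - target)) by ring.
  replace (4 * delta) with (2 * delta + 2 * delta) by ring.
  apply pre_step_push; auto; try lra.
  - apply Hr; auto.
  - unfold aa_. intros C. specialize (Gij C). lra.
  - intros k Hk. rewrite two_out_spread by ring. apply spread_reached; auto.
  - intros k. rewrite control_push. unfold two_out. rewrite Nat.eqb_refl. ring.
  - intros k Hk. apply Hb; auto. lia.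
Qed.

Lemma final_push_j0 : ai + aj <= 1 ->
  hji - theta - 4 * delta <= target - final_pre j0.
Proof.
  intros Hnarrow.
  destruct theta_spec as (Hth & Hthm & Htha & _). destruct delta_spec as (Hdl & Hdlt & _).
  destruct margin_spec as (_ & _ & _ & Gj & Gji).
  destruct (a_spec i0 Hi0) as [Hai _], (a_spec j0 Hj0) as [Haj _].
  replace (target - final_pre j0) with (-1 * (final_pre j0 - target)) by ring.
  replace (4 * delta) with (2 * delta + 2 * delta) by ring.
  apply pre_step_push; auto; try lra.
  - apply Hr; auto.
  - unfold aa_. intros C. specialize (Gji C). lra.
  - intros k Hk. rewrite two_out_comm, two_out_spread by (ring || auto).
    apply spread_reached; auto.
  - intros k. rewrite control_push. unfold two_out.
    rewrite (proj2 (Nat.eqb_neq j0 i0)), Nat.eqb_refl by auto. ring.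
  - intros k Hk. apply Hb; auto. lia.
Qed.

Lemma reach_narrow : ai + aj <= 1 ->
  cmax n w r eta - eps <= X (S (S (T1 + T2))) i0 - X (S (S (T1 + T2))) j0.
Proof.
  intros Hnarrow.
  destruct theta_spec as (Hth & _ & _ & Hthe). destruct delta_spec as (Hdl & Hdlt & _).
  destruct (a_spec i0 Hi0) as [Hai _], (a_spec j0 Hj0) as [Haj _].
  destruct (target_narrow Hnarrow) as [Et _].
  pose proof (final_push_i0 Hnarrow) as P1. pose proof (final_push_j0 Hnarrow) as P2.
  rewrite (X_S (S (T1 + T2))), !step_pre_step.
  assert (B1 : proj01 (target + h_ n w r eta i0 j0) - (theta + 4 * delta)
               <= proj01 (final_pre i0)).
  { eapply Rle_trans; [apply proj01_sub_ge; lra | apply proj01_le_compat; lra]. }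
  assert (B2 : proj01 (final_pre j0) <= proj01 (target - hji) + (theta + 4 * delta)).
  { eapply Rle_trans; [apply proj01_le_compat | apply proj01_add_le]; lra. }
  pose proof (proj01_gap_narrow ai aj (h_ n w r eta i0 j0) hji ltac:(lra) ltac:(lra) Hnarrow)
    as Hgap.
  cbv zeta in Hgap. rewrite <- Et in Hgap.
  rewrite Hc. unfold c_. lra.
Qed.

Lemma reaches_E_set : exists t, (1 <= t <= T1 + T2 + 2)%nat /\
  E_set n (cmax n w r eta - eps) (X t).
Proof.
  destruct (Rlt_dec 1 (ai + aj)) as [Hwide|Hnarrow].
  - exists (S (T1 + T2)). split; [lia|].
    apply E_set_of_pair with i0 j0; auto.
    + intros k Hk. apply X_range; auto.
    + apply reach_wide; auto.
  - exists (S (S (T1 + T2))). split; [lia|].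
    apply E_set_of_pair with i0 j0; auto.
    + intros k Hk. apply X_range; auto.
    + apply reach_narrow; lra.
Qed.

End Run.

Lemma robustly_reachable_E : robustly_reachable n w r eta (E_set n (cmax n w r eta - eps)).
Proof.
  destruct delta_spec as (Hdl & _ & Hdle & _).
  exists (T1 + T2 + 2)%nat, delta. split; [lia|]. split; [lra|].
  intros x0 Hx0. right. exists (fun _ _ => delta), history_control.
  split; [intros; lra|]. split.
  - intros h i k Hi Hk. apply control_admissible; auto.
  - intros b Hb. apply (reaches_E_set x0 b); auto.
Qed.

End Reachability.

Theorem lemma9 (n : nat) (r w : nat -> R) (eta eps : R) :
  (3 <= n)%nat ->
  (forall i, (i < n)%nat -> 0 < r i <= 1) ->
  (forall i, (i < n)%nat -> 0 < w i < 1) ->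
  0 < eta ->
  0 < eps ->
  robustly_reachable n w r eta (E_set n (cmax n w r eta - eps)).
Proof.
  intros Hn Hr Hw Heta Heps.
  destruct (cmax_attained n w r eta ltac:(lia)) as (i0 & j0 & Hi0 & Hj0 & Hij & Hc).
  destruct (pos_lower_bound w n) as (wmin & Hwmin & Hwmin_le); [intros; apply Hw; auto|].
  destruct (pos_lower_bound (a_ n w eta) n) as (amin & Hamin & Hamin_le);
    [intros; apply a_bounds; auto; lia|].
  destruct (pos_lower_bound r n) as (rmin & Hrmin & Hrmin_le); [intros; apply Hr; auto|].
  assert (Hq : 0 <= 1 - wmin < 1)
    by (pose proof (Hwmin_le 0%nat ltac:(lia)); pose proof (Hw 0%nat ltac:(lia)); lra).
  destruct (pow_lt_1_zero (1 - wmin) ltac:(rewrite Rabs_right; lra) (rmin / 2) ltac:(lra))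
    as [T1 HT1].
  specialize (HT1 T1 (le_n _)). rewrite Rabs_right in HT1 by (apply Rle_ge, pow_le; lra).
  destruct (archimed_cor1 (amin / 4) ltac:(lra)) as (T2 & HT2 & HT2pos).
  exact (robustly_reachable_E n r w eta eps Hn Hr Hw Heta Heps i0 j0 Hi0 Hj0 Hij Hc
           wmin amin rmin Hwmin Hwmin_le Hamin Hamin_le Hrmin Hrmin_le T1 T2 HT1 HT2pos HT2).
Qed.
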